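(* There exist two-dimensional random vectors $\mathbf{X},\mathbf{Y}$ with $\mathbf{X}\succ_{\mathrm{FSD}}\mathbf{Y}$ and a function $u\in\mathcal{U}$ with $\frac{\partial^2u(x_1,x_2)}{\partial x_1\partial x_2}\le0$ such that $\mathbb{E}\,u(\mathbf{X})\le\mathbb{E}\,u(\mathbf{Y})$; i.e. strict first-order stochastic dominance does not in general imply strictly greater expected utility for all $u\in\mathcal{U}$ with nonpositive mixed partial derivative.
   Context: For $\mathbf{x},\mathbf{y}\in\mathbb{R}^2$: $\mathbf{y}\preceq_p\mathbf{x}$ iff $y_i\le x_i$ for all $i$; $\mathbf{x}\succ_p\mathbf{y}$ iff $x_i\ge y_i$ for all $i$ and $x_i>y_i$ for some $i$. $\mathcal{U}$ is the class of strictly monotonically increasing $u:\mathbb{R}^2\to\mathbb{R}$ ($\mathbf{x}\succ_p\mathbf{y}\implies u(\mathbf{x})>u(\mathbf{y})$). CDF: $F_{\mathbf{X}}(\mathbf{x})=P(\mathbf{X}\preceq_p\mathbf{x})$. $\mathbf{X}\succ_{\mathrm{FSD}}\mathbf{Y}$ iff $F_{\mathbf{X}}(\mathbf{v})\le F_{\mathbf{Y}}(\mathbf{v})$ for all $\mathbf{v}$ and strict inequality for some $\mathbf{v}$. *)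

From HB Require Import structures.
From mathcomp Require Import all_boot all_order all_algebra.
From mathcomp Require Import all_classical all_reals all_analysis.
Set Implicit Arguments. Unset Strict Implicit. Unset Printing Implicit Defensive.
Import Order.TTheory GRing.Theory Num.Theory.
Import numFieldNormedType.Exports.
Local Open Scope classical_set_scope.
Local Open Scope ring_scope.

Section Defs.
Variable R : realType.

Definition pleq (y x : R * R) : Prop := y.1 <= x.1 /\ y.2 <= x.2.

Definition psucc (x y : R * R) : Prop :=
  x.1 >= y.1 /\ x.2 >= y.2 /\ (x.1 > y.1 \/ x.2 > y.2).

Definition strictly_increasing2 (u : R * R -> R) : Prop :=
  forall x y, psucc x y -> u x > u y.

Definition cdf2 d (T : measurableType d) (P : probability T R)
  (X : T -> R * R) (v : R * R) : \bar R :=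
  P [set t | pleq (X t) v].

Definition FSD d (T : measurableType d) (P : probability T R)
  (X Y : T -> R * R) : Prop :=
  (forall v, (cdf2 P X v <= cdf2 P Y v)%E) /\
  (exists v, (cdf2 P X v < cdf2 P Y v)%E).

Definition pd1 (u : R * R -> R) (x : R * R) : R :=
  derive1 (fun t => u (t, x.2)) x.1.
Definition pd2 (u : R * R -> R) (x : R * R) : R :=
  derive1 (fun s => u (x.1, s)) x.2.

Definition mixed_partial_nonpos (u : R * R -> R) : Prop :=
  forall x : R * R,
    [/\ derivable (fun t => u (t, x.2)) x.1 1,
        derivable (fun s => u (x.1, s)) x.2 1,
        derivable (fun s => pd1 u (x.1, s)) x.2 1 /\
          derive1 (fun s => pd1 u (x.1, s)) x.2 <= 0 &
        derivable (fun t => pd2 u (t, x.2)) x.1 1 /\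
          derive1 (fun t => pd2 u (t, x.2)) x.1 <= 0].
End Defs.

From HB Require Import structures.
From mathcomp Require Import all_boot all_order all_algebra.
From mathcomp Require Import all_classical all_reals all_analysis.
From mathcomp Require Import lra.
Import Order.TTheory GRing.Theory Num.Theory.
Local Open Scope classical_set_scope.
Local Open Scope ring_scope.

(* Toss a fair coin and let X be (1,0) or (0,1), and Y be (1,1) or (0,0),
   accordingly. Both have uniform {0,1} marginals, but Y is the concordant
   coupling, so its joint CDF dominates that of X everywhere (a rearrangement
   inequality for indicators) and strictly at the origin: X ≻_FSD Y. A
   separable utility u(x) = f x1 + g x2 with f, g strictly increasing is in U,
   has zero mixed partial derivative, and its expectation only sees the
   marginals; for u(x) = x1 + x2 both expectations equal 1. *)

Section SeparableUtility.
Variable R : realType.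
Variables f g : R -> R.

Definition sep2 (x : R * R) : R := f x.1 + g x.2.

Lemma strictly_increasing2_sep2 :
  {homo f : s t / s < t} -> {homo g : s t / s < t} -> strictly_increasing2 sep2.
Proof.
move=> f_incr g_incr x y [le1 [le2 [lt1|lt2]]]; rewrite /sep2.
- by apply: ltr_leD; [exact: f_incr | exact: (ltW_homo g_incr)].
- by apply: ler_ltD; [exact: (ltW_homo f_incr) | exact: g_incr].
Qed.

Hypotheses (f_der : forall t, derivable f t 1) (g_der : forall t, derivable g t 1).

Lemma derivable_sep2_1 x : derivable (fun t => sep2 (t, x.2)) x.1 1.
Proof. exact (derivableD (f_der x.1) (derivable_cst (g x.2) x.1 1)). Qed.

Lemma derivable_sep2_2 x : derivable (fun s => sep2 (x.1, s)) x.2 1.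
Proof. exact (derivableD (derivable_cst (f x.1) x.2 1) (g_der x.2)). Qed.

Lemma pd1_sep2 x : pd1 sep2 x = derive1 f x.1.
Proof.
rewrite /pd1 !derive1E.
have -> : (fun t => sep2 (t, x.2)) = (f + cst (g x.2))%R by [].
by rewrite deriveD ?derive_cst ?addr0.
Qed.

Lemma pd2_sep2 x : pd2 sep2 x = derive1 g x.2.
Proof.
rewrite /pd2 !derive1E.
have -> : (fun s => sep2 (x.1, s)) = (cst (f x.1) + g)%R by [].
by rewrite deriveD ?derive_cst ?add0r.
Qed.

Lemma mixed_partial_nonpos_sep2 : mixed_partial_nonpos sep2.
Proof.
move=> x; split; [exact: derivable_sep2_1 | exact: derivable_sep2_2 | |].
- have -> : (fun s => pd1 sep2 (x.1, s)) = cst (derive1 f x.1).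
    by apply/funext => s; rewrite pd1_sep2.
  by rewrite derive1_cst; split; [exact: derivable_cst |].
- have -> : (fun t => pd2 sep2 (t, x.2)) = cst (derive1 g x.2).
    by apply/funext => t; rewrite pd2_sep2.
  by rewrite derive1_cst; split; [exact: derivable_cst |].
Qed.

End SeparableUtility.

Lemma andb_rearrangement (R : numDomainType) (a b c d : bool) :
  (b ==> a) -> (d ==> c) ->
  (b && c)%:R + (a && d)%:R <= (b && d)%:R + (a && c)%:R :> R.
Proof.
by case: a; case: b; case: c; case: d => //= _ _;
  rewrite ?addr0 ?add0r ?lexx ?ler0n // ler_nat.
Qed.

Lemma measurable_fun_on_bool d (U : sigmaRingType d) (h : bool -> U) :
  measurable_fun setT h.
Proof. by move=> _ B _; exact: I. Qed.

Section FairCoin.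
Variable R : realType.

Definition fair_coin : probability bool R := bernoulli_prob 2^-1.

Let half01 : (0 : R) <= 2^-1 <= (1 : R).
Proof. by apply/andP; split; lra. Qed.

Let onem_half : 1 - 2^-1 = 2^-1 :> R.
Proof. lra. Qed.

Lemma fair_coinE (A : set bool) :
  fair_coin A = (2^-1 * ((true \in A)%:R + (false \in A)%:R))%:E.
Proof.
rewrite /fair_coin /= bernoulli_probE // !diracE /unstable.onem onem_half.
by rewrite -!EFinM -EFinD mulrDr.
Qed.

Lemma fair_coin_integrable (h : bool -> R) :
  fair_coin.-integrable setT (fun b => (h b)%:E).
Proof.
apply/integrableP; split; first exact: measurable_fun_on_bool.
by rewrite integral_bernoulli_prob //= -!EFinM -EFinD ltry.
Qed.

Lemma integral_fair_coin (h : bool -> R) : (forall b, 0 <= h b) ->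
  (\int[fair_coin]_b (h b)%:E = (2^-1 * (h true + h false))%:E)%E.
Proof.
move=> h0; rewrite integral_bernoulli_prob // /unstable.onem onem_half.
by rewrite -!EFinM -EFinD mulrDr.
Qed.

Definition discordant (b : bool) : R * R := if b then (1, 0) else (0, 1).
Definition concordant (b : bool) : R * R := if b then (1, 1) else (0, 0).

Lemma cdf2_fair_coin (Z : bool -> R * R) v : cdf2 fair_coin Z v =
  (2^-1 * ((asbool (pleq (Z true) v))%:R + (asbool (pleq (Z false) v))%:R))%:E.
Proof. exact: fair_coinE. Qed.

Lemma FSD_discordant_concordant : FSD fair_coin discordant concordant.
Proof.
split.
- move=> v; rewrite !cdf2_fair_coin lee_fin /pleq /= !asbool_and !asboolb.
  rewrite ler_wpM2l; [by [] | lra |].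
  by apply: andb_rearrangement; apply/implyP => ?; lra.
- exists (0, 0); rewrite !cdf2_fair_coin lte_fin /pleq /= !asbool_and !asboolb.
  by rewrite lexx ler10 /=; lra.
Qed.

End FairCoin.

Theorem mainTheorem11 (R : realType) :
  exists (d : measure_display) (T : measurableType d) (P : probability T R)
         (X Y : T -> R * R) (u : R * R -> R),
    [/\ measurable_fun setT X /\ measurable_fun setT Y,
        FSD P X Y,
        strictly_increasing2 u /\ mixed_partial_nonpos u,
        P.-integrable setT (fun t => (u (X t))%:E) /\
          P.-integrable setT (fun t => (u (Y t))%:E) &
        (\int[P]_t (u (X t))%:E <= \int[P]_t (u (Y t))%:E)%E].
Proof.
exists _, bool, (fair_coin R), (discordant R), (concordant R), (sep2 R id id).
split.
- by split; exact: measurable_fun_on_bool.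
- exact: FSD_discordant_concordant.
- split; first exact: strictly_increasing2_sep2.
  by apply: mixed_partial_nonpos_sep2 => t; exact: derivable_id.
- by split; exact: fair_coin_integrable.
- by rewrite !integral_fair_coin ?lee_fin /sep2 => [|[]|[]] /=; lra.
Qed.
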